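(* Let $\ell_1,t_1,k$ be positive integers and $\ell=\ell_1+t_1$. Consider the signature scheme RSA-FDH with message space $\{0,1\}^{\ell}$ and hash function $h:\{0,1\}^{\ell}\to\{0,1\}^{k}$, in the common chosen prefix collision tractable random oracle model $\mathrm{common\text{-}CP\text{-}CT\text{-}ROM}_{(\ell_1,t_1,k)}$. Then there exists a PPT adversary $\mathcal{A}$ which, by making queries to the signing oracle and to the common chosen prefix collision oracle $\mathcal{COMMON\text{-}CP\text{-}CO}^h$, outputs a valid forgery in the EUF-CMA game (i.e. breaks RSA-FDH) with probability at least $1-e^{(1-2^{\ell_1})/2^k}$.
   Context: Model $\mathrm{common\text{-}CP\text{-}CT\text{-}ROM}_{(\ell_1,t_1,k)}$: let $M=\{0,1\}^{\ell_1}$, $R=\{0,1\}^{t_1}$, $X=M\times R$ (an element $(m,r)$ is written as the string $m\|r$), $Y=\{0,1\}^k$, and let $h:X\to Y$ be a uniformly random function with table $\mathbb{T}_h=\{(x,h(x)):x\in X\}$. All parties may query the random oracle $\mathcal{RO}^h(x)$, which returns $h(x)$, and the oracle $\mathcal{COMMON\text{-}CP\text{-}CO}^h(r)$: given $r$ with $|r|=t_1$, it picks an entry $(m\|r,y)\in\mathbb{T}_h$ uniformly at random among entries whose input ends in $r$; if there is another entry $(m'\|r,y)\in\mathbb{T}_h$ with $m'\neq m$, it picks such an entry uniformly at random and returns $(m\|r,m'\|r)$; otherwise it returns $\perp$. RSA-FDH: $\mathsf{RSAGen}(1^k)$ chooses distinct random $k/2$-bit primes $p,q$, sets $N=pq$,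 $\phi=(p-1)(q-1)$, picks $e$ at random from $\mathbb{Z}_{\phi}$ and computes $d$ with $ed\equiv1\pmod{\phi}$. Key generation outputs $vk=(N,e)$, $sk=(N,d)$. $\mathsf{Sign}(sk,m)$ returns $\sigma=h(m)^d\bmod N$. $\mathsf{Verify}(vk,m,\sigma)$ returns 1 iff $h(m)=\sigma^e\bmod N$. EUF-CMA game: the challenger generates $(sk,vk)$ and gives $vk$ to the adversary, who may query the signing oracle on messages of its choice (receiving $\mathsf{Sign}(sk,m)$) as well as the model's oracles, and finally outputs $(m^*,\sigma^* )$; the adversary breaks the scheme (outputs a valid forgery) if $\mathsf{Verify}(vk,m^*,\sigma^* )=1$ and $m^*$ was never queried to the signing oracle. *)

From HB Require Import structures.
From mathcomp Require Import all_boot all_order all_algebra.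
From mathcomp Require Import reals sequences exp.

Set Implicit Arguments.
Unset Strict Implicit.
Unset Printing Implicit Defensive.

Import Order.TTheory GRing.Theory Num.Theory.
Local Open Scope ring_scope.

Definition bits2nat (s : seq bool) : nat :=
  foldl (fun n (b : bool) => (n.*2 + b)%N) 0%N s.

Definition kbit_prime (j p : nat) : bool :=
  prime p && (2 ^ j.-1 <= p < 2 ^ j)%N.

Definition rsa_phi (p q : nat) : nat := (p.-1 * q.-1)%N.

Definition inv_mod (e phi : nat) : nat :=
  odflt 0%N (omap (@nat_of_ord phi) [pick d : 'I_phi | (e * d == 1 %[mod phi])%N]).

Definition avg {R : realType} {T : finType} (P : pred T) (f : T -> R) : R :=
  (\sum_(x | P x) f x) / (#|P|)%:R.

(* Adversaries: straight-line oracle programs over registers.         *)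
(* Every instruction is a single oracle call, a register move, or the *)
(* loading of a constant; hence running time is linear in the program *)
(* cost below (times the oracle/IO cost): such adversaries are PPT.   *)
(* No arithmetic is available (so the adversary cannot e.g. factor N).*)
Inductive regval := VBits of seq bool | VNum of nat | VBot.

Inductive instr :=
| IConst of nat & seq bool          (* IConst dst s   : dst <- s               *)
| IVk of nat & nat                  (* IVk dN de      : dN <- N ; de <- e      *)
| IRO of nat & nat                  (* IRO src dst    : dst <- RO(src)         *)
| ICO of nat & nat & nat            (* ICO src d1 d2  : (d1,d2) <- CO(src)     *)
| ISign of nat & nat.               (* ISign src dst  : dst <- Sign(sk, src)   *)

Record adversary := Adversary {
  adv_body : seq instr;
  adv_out_msg : nat;
  adv_out_sig : nat }.

Definition instr_cost (i : instr) : nat :=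
  match i with IConst _ s => (size s).+1 | _ => 1%N end.

Definition adv_cost (A : adversary) : nat :=
  (\sum_(i <- adv_body A) instr_cost i)%N.

Definition upd (st : nat -> regval) (i : nat) (v : regval) : nat -> regval :=
  fun j => if j == i then v else st j.

Section Game.
Variables (R : realType) (l1 t1 k : nat).

Notation X := ((l1 + t1).-tuple bool).   (* X = M x R, x = m || r *)
Notation Y := (k.-tuple bool).
Notation Mt := (l1.-tuple bool).

Section Exec.
Variables (h : {ffun X -> Y}) (N e d : nat).

Definition hs (s : seq bool) : option (seq bool) :=
  omap (fun x : X => val (h x)) (insub s).

(* The result is the expected value of [fin] on the final registers and
   signing log, the expectation being over the collision oracle's coins. *)
Fixpoint exec (prog : seq instr) (st : nat -> regval) (log : seq (seq bool))
  (fin : (nat -> regval) -> seq (seq bool) -> R) : R :=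
  match prog with
  | [::] => fin st log
  | i :: prog' =>
    match i with
    | IConst dst s => exec prog' (upd st dst (VBits s)) log fin
    | IVk dN de => exec prog' (upd (upd st dN (VNum N)) de (VNum e)) log fin
    | IRO src dst =>
        let v := match st src with
                 | VBits s => if hs s is Some y then VBits y else VBot
                 | _ => VBot end in
        exec prog' (upd st dst v) log fin
    | ISign src dst =>
        match st src with
        | VBits s =>
            if hs s is Some y then
              exec prog' (upd st dst (VNum (bits2nat y ^ d %% N)%N)) (rcons log s) fin
            else exec prog' (upd st dst VBot) log fin
        | _ => exec prog' (upd st dst VBot) log fin
        end
    | ICO src d1 d2 =>
        let fail := exec prog' (upd (upd st d1 VBot) d2 VBot) log fin in
        match st src with
        | VBits r =>
          if size r == t1 then
            avg (fun _ : Mt => true) (fun m : Mt =>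
              let P := fun m' : Mt => (m' != m) && (hs (val m' ++ r) == hs (val m ++ r)) in
              if #|P| == 0%N then fail
              else avg P (fun m' : Mt =>
                     exec prog' (upd (upd st d1 (VBits (val m ++ r))) d2
                                   (VBits (val m' ++ r))) log fin))
          else fail
        | _ => fail
        end
    end
  end.

Definition rsa_verify (s : seq bool) (sg : nat) : bool :=
  if hs s is Some y then (bits2nat y == sg ^ e %[mod N])%N else false.

Definition forgery (A : adversary) (st : nat -> regval) (log : seq (seq bool)) : R :=
  match st (adv_out_msg A), st (adv_out_sig A) with
  | VBits s, VNum sg => (rsa_verify s sg && (s \notin log))%:R
  | _, _ => 0
  end.

Definition run (A : adversary) : R :=
  exec (adv_body A) (fun _ => VBot) [::] (forgery A).

End Exec.

Definition valid_pq (pq : 'I_(2 ^ (k %/ 2)) * 'I_(2 ^ (k %/ 2))) : bool :=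
  (pq.1 != pq.2 :> nat) && kbit_prime (k %/ 2) pq.1 && kbit_prime (k %/ 2) pq.2.

Definition euf_cma_win (A : adversary) : R :=
  avg valid_pq (fun pq =>
    let p := nat_of_ord pq.1 in let q := nat_of_ord pq.2 in
    let phi := rsa_phi p q in
    avg (fun e : 'I_phi => coprime e phi) (fun e =>
      avg (fun _ : {ffun X -> Y} => true) (fun h =>
        run h (p * q) e (inv_mod e phi) A))).

End Game.

(* The forger asks the collision oracle about the all-zero suffix r, receiving
   m||r and m'||r with h(m||r) = h(m'||r); it gets the signature of m||r from the
   signing oracle and outputs it as a signature of the fresh message m'||r, which
   verifies by RSA correctness.  It fails only when the uniformly drawn m has no
   partner, i.e. when h(m||r) avoids the 2^l1 - 1 values h(m'||r); for uniform h
   this has probability (1 - 2^-k)^(2^l1 - 1) <= exp((1 - 2^l1) / 2^k), whatever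
   the RSA key. *)

From mathcomp Require Import all_boot all_order all_algebra all_solvable.
From mathcomp Require Import reals sequences exp.
From mathcomp Require Import ring lra zify.

Set Implicit Arguments.
Unset Strict Implicit.
Unset Printing Implicit Defensive.

Import GRing.Theory Num.Theory.

Lemma fermat_little_iter p j x : prime p -> x ^ (j * p.-1).+1 = x %[mod p].
Proof.
move=> p_pr; have [p_dvd_x | p_ndvd_x] := boolP (p %| x).
  have x_mod_p : x %% p = 0 := eqP p_dvd_x.
  by rewrite expnS -modnMml x_mod_p mul0n mod0n.
have x_p_coprime : coprime x p by rewrite coprime_sym prime_coprime.
have Euler := Euler_exp_totient x_p_coprime; rewrite totient_prime // in Euler.
by rewrite expnS (mulnC j) expnM -modnMmr -modnXm Euler modnXm exp1n modnMmr muln1.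
Qed.

Lemma rsa_phi_gt1 p q : prime p -> prime q -> p != q -> 1 < rsa_phi p q.
Proof. move=> /prime_gt1 p_gt1 /prime_gt1 q_gt1 /eqP neq_pq; rewrite /rsa_phi; nia. Qed.

Lemma rsa_correct p q e d x : prime p -> prime q -> p != q ->
  e * d = 1 %[mod rsa_phi p q] -> (x ^ d %% (p * q)) ^ e = x %[mod p * q].
Proof.
move=> p_pr q_pr neq_pq ed1; have phi_gt1 : 1 < rsa_phi p q by apply: rsa_phi_gt1.
rewrite /rsa_phi in ed1 phi_gt1; set phi := p.-1 * q.-1 in ed1 phi_gt1.
have de : d * e = (d * e %/ phi * phi).+1.
  by rewrite {1}(divn_eq (d * e) phi) (mulnC d e) ed1 modn_small ?addn1.
have coprime_pq : coprime p q by rewrite prime_coprime // dvdn_prime2.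
rewrite modnXm -expnM de; apply/eqP; rewrite chinese_remainder //.
set j := d * e %/ phi; rewrite /phi mulnA fermat_little_iter //.
by rewrite -mulnA (mulnC p.-1) mulnA fermat_little_iter // !eqxx.
Qed.

Lemma inv_modP e phi : coprime e phi -> 1 < phi -> e * inv_mod e phi = 1 %[mod phi].
Proof.
move=> coprime_e phi_gt1; rewrite /inv_mod; case: pickP => [d /= /eqP // | no_inv].
have phi_gt0 : 0 < phi by apply: ltnW.
have := no_inv (Ordinal (ltn_pmod (e ^ (totient phi).-1) phi_gt0)).
by rewrite /= modnMmr -expnS prednK ?totient_gt0 // Euler_exp_totient // eqxx.
Qed.

Section FunctionsAvoidingAPoint.
Variables (X Y : finType) (x0 : X) (S : {pred X}).
Hypothesis x0_notin_S : x0 \notin S.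

Lemma card_ffun_avoid :
  #|[pred h : {ffun X -> Y} | [forall x in S, h x != h x0]]| * #|Y| ^ #|S| =
  #|Y| ^ #|X| * #|Y|.-1 ^ #|S|.
Proof.
(* Sorting h by the value y0 = h x0, the functions with h x0 = y0 that avoid y0 on S
   form a product of sets. *)
pose F y0 x : pred Y := if x == x0 then pred1 y0 else if x \in S then predC1 y0 else predT.
have card_avoid : #|[pred h : {ffun X -> Y} | [forall x in S, h x != h x0]]| =
    \sum_y0 #|family (F y0)|.
  rewrite -sum1_card (partition_big (fun h : {ffun X -> Y} => h x0) xpredT) //=.
  apply: eq_bigr => y0 _; rewrite -sum1_card; apply: eq_bigl => h; rewrite !inE.
  apply/andP/familyP => [[/forall_inP avoid /eqP hx0] x | fam].
    rewrite /F; case: eqVneq => [-> | _]; first by rewrite inE hx0.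
    by case: ifP => [xS | _]; rewrite ?inE -?hx0 ?avoid.
  have hx0 : h x0 = y0 by have := fam x0; rewrite /F eqxx inE => /eqP.
  split; last by rewrite hx0.
  apply/forall_inP => x xS; have := fam x; rewrite /F hx0 xS.
  by case: eqVneq xS x0_notin_S => [-> -> | _ _ /=]; rewrite ?inE.
have card_F y0 : #|family (F y0)| = #|Y|.-1 ^ #|S| * #|Y| ^ #|[predC [predU1 x0 & S]]|.
  rewrite card_family foldrE big_map big_enum /= (bigD1 x0) //= {1}/F eqxx card1 mul1n.
  rewrite (bigID (mem S)) /= -!prod_nat_const; congr (_ * _); apply: eq_big.
  - by move=> x /=; case: eqVneq => // ->; rewrite (negbTE x0_notin_S).
  - by move=> x /andP [/negbTE x_neq x_in]; rewrite /F x_neq x_in cardC1.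
  - by move=> x /=; rewrite !inE negb_or.
  - by move=> x /andP [/negbTE x_neq /negbTE x_notin]; rewrite /F x_neq x_notin cardT.
have card_X : #|X| = (1 + #|S| + #|[predC [predU1 x0 & S]]|)%N.
  rewrite -(cardC [predU1 x0 & S]) (cardD1 x0) inE eqxx /=; congr (_ + _ + _).
  by apply: eq_card => x; rewrite !inE; case: eqVneq => // ->; rewrite (negbTE x0_notin_S).
rewrite card_avoid (eq_bigr _ (fun y0 _ => card_F y0)) sum_nat_const card_X !expnD expn1.
ring.
Qed.

End FunctionsAvoidingAPoint.

Local Open Scope ring_scope.

Section Average.
Variable R : realType.

Lemma eq_avg (T : finType) (P : pred T) (f g : T -> R) : f =1 g -> avg P f = avg P g.
Proof. by move=> eq_fg; rewrite /avg (eq_bigr _ (fun x _ => eq_fg x)). Qed.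

Lemma avg_const (T : finType) (P : pred T) (f : T -> R) c :
  (exists x, P x) -> (forall x, P x -> f x = c) -> avg P f = c.
Proof.
move=> [x Px] f_c; rewrite /avg (eq_bigr (fun _ => c)) // sumr_const -[c *+ _]mulr_natr.
by rewrite mulfK // pnatr_eq0 -lt0n; apply/card_gt0P; exists x.
Qed.

Lemma avg1B (T : finType) (P : pred T) (f : T -> R) :
  (exists x, P x) -> avg P (fun x => 1 - f x) = 1 - avg P f.
Proof.
move=> [x Px]; rewrite /avg sumrB sumr_const mulrBl mulfV //.
by rewrite pnatr_eq0 -lt0n; apply/card_gt0P; exists x.
Qed.

Lemma avgT_indicator (T : finType) (P : pred T) :
  avg xpredT (fun x => (P x)%:R) = #|P|%:R / #|T|%:R :> R.
Proof.
rewrite /avg -[#|P|%:R]sumr_const [in RHS]big_mkcond /=; congr (_ / _).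
by apply: eq_bigr => x _; rewrite unfold_in; case: (P x).
Qed.

Lemma avg_exchange (T U : finType) (F : T -> U -> R) :
  avg xpredT (fun t => avg xpredT (F t)) = avg xpredT (fun u => avg xpredT (F^~ u)).
Proof.
rewrite /avg mulr_suml [RHS]mulr_suml.
under eq_bigr do rewrite !mulr_suml.
under [RHS]eq_bigr do rewrite !mulr_suml.
by rewrite exchange_big /=; apply: eq_bigr => u _; apply: eq_bigr => t _; rewrite mulrAC.
Qed.

Lemma avg_ffun_avoid (X Y : finType) (x0 : X) (S : {pred X}) :
  x0 \notin S -> (0 < #|Y|)%N ->
  avg xpredT (fun h : {ffun X -> Y} => ([forall x in S, h x != h x0])%:R) =
  (1 - #|Y|%:R^-1) ^+ #|S| :> R.
Proof.
move=> x0_notin_S Y_gt0; have Y_neq0 : #|Y|%:R != 0 :> R by rewrite pnatr_eq0 -lt0n.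
have := congr1 (fun n => n%:R : R) (card_ffun_avoid Y x0_notin_S).
rewrite /= !natrM !natrX -subn1 natrB // => card_avoid.
have -> : 1 - #|Y|%:R^-1 = (#|Y|%:R - 1) / #|Y|%:R :> R by rewrite mulrBl divff ?mul1r.
rewrite avgT_indicator card_ffun natrX expr_div_n.
by apply/eqP; rewrite eqr_div ?expf_neq0 // card_avoid mulrC.
Qed.

End Average.

Lemma exprn1B_le_expR (R : realType) (x : R) n : x <= 1 -> (1 - x) ^+ n <= expR (- (n%:R * x)).
Proof.
move=> x_le1; rewrite -mulrN expRM_natl; apply: lerXn2r; rewrite ?nnegrE ?expR_ge0 ?subr_ge0 //.
exact: expR_ge1Dx.
Qed.

Section Attack.
Variables (R : realType) (l1 t1 k : nat).

Local Notation X := ((l1 + t1).-tuple bool).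
Local Notation Y := (k.-tuple bool).
Local Notation M := (l1.-tuple bool).

Definition pad (m : M) : X := cat_tuple m (nseq_tuple t1 false).

Lemma pad_inj : injective pad.
Proof.
move=> m1 m2 /(congr1 val) /eqP; rewrite eqseq_cat ?size_tuple // => /andP [/eqP eq_m _].
exact: val_inj.
Qed.

Definition partner (h : {ffun X -> Y}) (m : M) : pred M :=
  fun m' => (m' != m) && (h (pad m') == h (pad m)).

Definition collides (h : {ffun X -> Y}) (m : M) : bool := [exists m', partner h m m'].

Definition forger : adversary :=
  Adversary [:: IConst 0 (nseq t1 false); ICO 0 1 2; ISign 1 3] 2 3.

Lemma hs_pad (h : {ffun X -> Y}) m : hs h (val m ++ nseq t1 false) = Some (val (h (pad m))).
Proof. by rewrite /hs (_ : _ ++ _ = val (pad m)) // valK. Qed.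

Lemma run_forger h N e d :
  (forall x, (x ^ d %% N) ^ e = x %[mod N])%N ->
  run R h N e d forger = avg xpredT (fun m => (collides h m)%:R).
Proof.
move=> rsa_ok; rewrite /run /= size_nseq eqxx /avg; congr (_ / _); apply: eq_bigr => m _.
have partnerE : (fun m' : M => (m' != m) &&
    (hs h (val m' ++ nseq t1 false) == hs h (val m ++ nseq t1 false))) =1 partner h m.
  by move=> m'; rewrite /partner !hs_pad (inj_eq (@Some_inj _)) (inj_eq val_inj).
rewrite (eq_card partnerE) (eq_bigl _ _ partnerE) /collides.
have [[m' partner_m'] | no_partner] := existsP.
  have partner_neq0 : #|partner h m| != 0%N by rewrite -lt0n; apply/card_gt0P; exists m'.
  rewrite (negbTE partner_neq0) (eq_bigr (fun _ => 1)); last first.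
    move=> m'' /andP [neq_m'' /eqP coll_m''].
    rewrite /forgery /= /rsa_verify !hs_pad coll_m'' rsa_ok eqxx /= inE.
    by rewrite eqseq_cat ?size_tuple // eqxx andbT (inj_eq val_inj) neq_m''.
  by rewrite sumr_const mulfV // pnatr_eq0.
have -> : (#|partner h m| == 0)%N.
  by apply/eqP/eq_card0 => m'; apply/negP => partner_m'; apply: no_partner; exists m'.
by rewrite /forgery.
Qed.

Lemma card_other_pads m : #|[predD1 codom pad & pad m]| = (2 ^ l1).-1.
Proof.
have card_pads : #|codom pad| = (2 ^ l1)%N.
  by rewrite (card_codom pad_inj) card_tuple card_bool.
by rewrite -card_pads [in RHS](cardD1 (pad m)) codom_f.
Qed.

Lemma collidesE h m :
  collides h m = ~~ [forall x in [predD1 codom pad & pad m], h x != h (pad m)].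
Proof.
rewrite /collides negb_forall_in; apply/existsP/exists_inP => [[m'] | [x]].
  move=> /andP [neq_m' coll_m']; exists (pad m'); last by rewrite negbK.
  by rewrite !inE codom_f (inj_eq pad_inj) neq_m'.
rewrite !inE negbK => /andP [neq_x /codomP [m' eq_x]] coll_x; exists m'.
by rewrite /partner -eq_x coll_x andbT; apply: contraNneq neq_x => eq_m; rewrite eq_x eq_m.
Qed.

Lemma avg_collides :
  avg xpredT (fun h : {ffun X -> Y} => avg xpredT (fun m => (collides h m)%:R)) =
  1 - (1 - (2 ^+ k)^-1) ^+ (2 ^ l1).-1 :> R.
Proof.
have card_Y : #|{: Y}| = (2 ^ k)%N by rewrite card_tuple card_bool.
rewrite avg_exchange; apply: avg_const => [|m _]; first by exists [tuple of nseq l1 false].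
pose S := [predD1 codom pad & pad m].
have collides_indicator h :
    (collides h m)%:R = 1 - ([forall x in S, h x != h (pad m)])%:R :> R.
  by rewrite collidesE -/S; case: [forall x in S, _]; rewrite ?subrr ?subr0.
rewrite (eq_avg _ collides_indicator) avg1B; last by exists [ffun=> [tuple of nseq k false]].
rewrite avg_ffun_avoid ?card_other_pads ?card_Y ?natrX ?expn_gt0 //.
by rewrite !inE eqxx.
Qed.

Lemma euf_cma_win_forger :
  (exists p q, p <> q /\ kbit_prime (k %/ 2) p /\ kbit_prime (k %/ 2) q) ->
  euf_cma_win R l1 t1 k forger = 1 - (1 - (2 ^+ k)^-1) ^+ (2 ^ l1).-1.
Proof.
move=> [p [q [neq_pq [p_prime q_prime]]]]; rewrite -avg_collides; apply: avg_const.
  have p_lt : (p < 2 ^ (k %/ 2))%N by case/andP: p_prime => _ /andP [].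
  have q_lt : (q < 2 ^ (k %/ 2))%N by case/andP: q_prime => _ /andP [].
  by exists (Ordinal p_lt, Ordinal q_lt); rewrite /valid_pq /= p_prime q_prime !andbT; apply/eqP.
move=> [p' q'] /andP [/andP [neq_pq' /andP [p'_prime _]] /andP [q'_prime _]] /=.
have phi_gt1 := rsa_phi_gt1 p'_prime q'_prime neq_pq'.
apply: avg_const => [|e coprime_e]; first by exists (Ordinal phi_gt1); rewrite /= coprime1n.
apply: eq_avg => h; apply: run_forger => x.
by apply: rsa_correct => //; apply: inv_modP.
Qed.

End Attack.

Unset Implicit Arguments.

Theorem theorem1 (R : realType) (l1 t1 k : nat)
  (hl1 : (0 < l1)%N) (ht1 : (0 < t1)%N) (hk : (0 < k)%N)
  (hkeys : exists p q : nat,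
      p <> q /\ kbit_prime (k %/ 2) p /\ kbit_prime (k %/ 2) q) :
  exists A : adversary,
    (adv_cost A <= 10 + (l1 + t1 + k))%N /\
    1 - expR ((1 - 2 ^+ l1) / 2 ^+ k) <= euf_cma_win R l1 t1 k A.
Proof.
exists (forger t1); split.
  by rewrite /adv_cost !big_cons big_nil /= size_nseq; lia.
rewrite euf_cma_win_forger // lerD2l lerN2.
have pow2_ge1 : 1 <= 2 ^+ k :> R by apply: exprn_ege1; lra.
have -> : (1 - 2 ^+ l1) / 2 ^+ k = - ((2 ^ l1).-1%:R * (2 ^+ k)^-1) :> R.
  by rewrite -subn1 natrB ?expn_gt0 // natrX -mulNr opprB.
by apply: exprn1B_le_expR; rewrite invf_le1 //; lra.
Qed.
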